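(* Let $L$ be a minimal shift with linear complexity, i.e. $p_L(n)=O(n)$. Then $SP_L$ is finite.
   Context: $A$ is a finite alphabet, and $\sigma$ deletes the first letter. A shift is a closed $L\subseteq A^{\mathbb N}$ with $\sigma(L)\subseteq L$. It is minimal if it contains no nonempty proper closed $\sigma$-invariant subset. $p_L(n)$ is the number of length-$n$ factors of words of $L$. A factor $u$ is left special if $bu$ is a factor for at least two letters $b\in A$. $SP_L$ is the set of infinite words all of whose prefixes are left special factors of $L$. *)

From Stdlib Require Import ClassicalEpsilon List.
From mathcomp Require Import all_boot.
Set Implicit Arguments. Unset Strict Implicit. Unset Printing Implicit Defensive.

Section Shifts.
Variable A : finType.

Definition word := nat -> A.

Definition shift (x : word) : word := fun n => x n.+1.

Definition prefix (n : nat) (x : word) : seq A := [seq x j | j <- iota 0 n].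

(* closed in the product topology of A^N (A discrete): x belongs to L as
   soon as every cylinder around x meets L *)
Definition closed (L : word -> Prop) : Prop :=
  forall x : word, (forall n, exists y, L y /\ prefix n y = prefix n x) -> L x.

Definition shift_invariant (L : word -> Prop) : Prop :=
  forall x, L x -> L (shift x).

Definition is_shift (L : word -> Prop) : Prop := closed L /\ shift_invariant L.

Definition minimal_shift (L : word -> Prop) : Prop :=
  is_shift L /\
  forall M : word -> Prop,
    (forall x, M x -> L x) -> closed M -> shift_invariant M ->
    (exists x, M x) -> forall x, L x -> M x.

Definition factor (L : word -> Prop) (u : seq A) : Prop :=
  exists x, L x /\ exists i, u = [seq x (i + j) | j <- iota 0 (size u)].

Definition pb (P : Prop) : bool :=
  if excluded_middle_informative P then true else false.

Definition complexity (L : word -> Prop) (n : nat) : nat :=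
  #|[set t : n.-tuple A | pb (factor L (tval t))]|.

Definition linear_complexity (L : word -> Prop) : Prop :=
  exists C N : nat, forall n, N <= n -> complexity L n <= C * n.

Definition left_special (L : word -> Prop) (u : seq A) : Prop :=
  factor L u /\ exists b1 b2 : A, b1 <> b2 /\ factor L (b1 :: u) /\ factor L (b2 :: u).

Definition SP (L : word -> Prop) (x : word) : Prop :=
  forall n, left_special L (prefix n x).

Definition finite_set (P : word -> Prop) : Prop :=
  exists s : list word, forall x, P x -> List.In x s.

End Shifts.

(* Every factor of a minimal shift extends to the left, so each length-n factor
   has at least one left extension and each left special one at least two:
   p_L(n+1) >= p_L(n) + #(left special factors of length n).  If SP_L were
   infinite, pick k = C+1 of its elements; their prefixes of length n are
   pairwise distinct left special factors once n is large, so p_L grows by at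
   least k at each step and eventually exceeds the bound C n. *)
From Stdlib Require Import Classical ClassicalEpsilon FunctionalExtensionality.
From mathcomp Require Import all_boot zify.

Set Implicit Arguments. Unset Strict Implicit. Unset Printing Implicit Defensive.

Lemma pbP (P : Prop) : reflect P (pb P).
Proof. by rewrite /pb; case: excluded_middle_informative => ?; constructor. Qed.

Lemma eventually_forall_ltn (Q : nat -> nat -> Prop) k :
  (forall i, i < k -> exists B, forall n, B <= n -> Q i n) ->
  exists B, forall i n, i < k -> B <= n -> Q i n.
Proof.
elim: k => [|k IH] evQ; first by exists 0.
have [B HB] := IH (fun i lt_ik => evQ i (ltnW lt_ik)).
have [Bk HBk] := evQ k (ltnSn k).
exists (maxn B Bk) => i n; rewrite ltnS leq_eqVlt => /orP [/eqP -> | lt_ik] le_n.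
  by apply: HBk; lia.
by apply: HB => //; lia.
Qed.

Lemma not_finite_injective (T : Type) (P : T -> Prop) :
  ~ (exists s : list T, forall x, P x -> List.In x s) ->
  forall k, exists g : nat -> T, (forall i, i < k -> P (g i)) /\
    (forall i j, i < k -> j < k -> g i = g j -> i = j).
Proof.
move=> infP; elim=> [|k [g [Pg inj_g]]].
  have [x0 _] : exists x, P x.
    apply: NNPP => noP; apply: infP; exists nil => x Px; apply: noP; by exists x.
  by exists (fun _ => x0).
have [x [Px notin_x]] : exists x, P x /\ ~ List.In x (List.map g (List.seq 0 k)).
  apply: NNPP => allin; apply: infP; exists (List.map g (List.seq 0 k)) => x Px.
  by apply: NNPP => notin_x; apply: allin; exists x.
have neq_x j : j < k -> x <> g j.
  move=> lt_jk eq_x; apply: notin_x; rewrite eq_x; apply: List.in_map.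
  by apply/List.in_seq; lia.
exists (fun i => if i == k then x else g i); split.
  move=> i; rewrite ltnS leq_eqVlt => /orP [/eqP ->|lt_ik]; first by rewrite eqxx.
  by rewrite (ltn_eqF lt_ik); exact: Pg.
move=> i j; rewrite !ltnS.
case: (eqVneq i k) => [->|neq_i]; case: (eqVneq j k) => [->|neq_j] // le_i le_j eq_g.
- by case: (neq_x j) => //; lia.
- by case: (neq_x i) => //; lia.
- by apply: inj_g => //; lia.
Qed.

Section Shifts.
Variable A : finType.
Implicit Types (L : word A -> Prop) (x y z : word A) (u : seq A).

Lemma size_prefix n x : size (prefix n x) == n.
Proof. by rewrite /prefix size_map size_iota. Qed.

Definition prefix_tuple n x : n.-tuple A := Tuple (size_prefix n x).

Lemma nth_prefix (a0 : A) n x m : m < n -> nth a0 (prefix n x) m = x m.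
Proof. by move=> lt_mn; rewrite /prefix (nth_map 0) ?size_iota // nth_iota. Qed.

Lemma prefix_neq_eventually x y :
  x <> y -> exists B, forall n, B <= n -> prefix n x <> prefix n y.
Proof.
move=> neq_xy; have [m neq_m] : exists m, x m <> y m.
  apply: NNPP => all_eq; apply: neq_xy; apply: functional_extensionality => m.
  by apply: NNPP => neq_m; apply: all_eq; exists m.
exists m.+1 => n lt_mn eq_pre; apply: neq_m.
by rewrite -(nth_prefix (x 0) x lt_mn) eq_pre nth_prefix.
Qed.

Lemma prefix_injective_eventually k (g : nat -> word A) :
  (forall i j, i < k -> j < k -> g i = g j -> i = j) ->
  exists B, forall n i j, B <= n -> i < k -> j < k ->
    prefix n (g i) = prefix n (g j) -> i = j.
Proof.
move=> inj_g.
have sep_pair i j : i < k -> j < k -> exists B, forall n, B <= n ->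
    prefix n (g i) = prefix n (g j) -> i = j.
  move=> lt_i lt_j; have [-> | neq_ij] := eqVneq i j; first by exists 0.
  have neq_g : g i <> g j by move/(inj_g i j lt_i lt_j)/eqP; rewrite (negbTE neq_ij).
  have [B HB] := prefix_neq_eventually neq_g.
  by exists B => n le_n /(HB n le_n).
have sep_one i : i < k -> exists B, forall n, B <= n ->
    forall j, j < k -> prefix n (g i) = prefix n (g j) -> i = j.
  move=> lt_i; have [B HB] := eventually_forall_ltn (sep_pair i ^~ lt_i).
  by exists B => n le_n j lt_j; apply: HB.
have [B HB] := eventually_forall_ltn sep_one.
by exists B => n i j le_n lt_i; apply: HB.
Qed.

Lemma shift_invariant_drop L x i :
  shift_invariant L -> L x -> L (fun t => x (i + t)).
Proof.
move=> invL Lx; elim: i => [//|i IH].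
have -> : (fun t => x (i.+1 + t)) = shift (fun t => x (i + t)).
  by apply: functional_extensionality => t; rewrite /shift addSnnS.
exact: invL.
Qed.

(* The points of L all of whose prefixes also occur at a positive position in L
   form a closed invariant subset containing [shift x] for any x in L. *)
Lemma minimal_factor_left_ext L u :
  minimal_shift L -> factor L u -> exists b, factor L (b :: u).
Proof.
move=> [[clL invL] minL] [x [Lx [i def_u]]].
pose M z := L z /\
  forall n, exists y j, L y /\ prefix n z = prefix n (fun t => y (j.+1 + t)).
have clM : closed M.
  move=> z Mz; split.
    by apply: clL => n; have [y [[Ly _] eq_pre]] := Mz n; exists y.
  move=> n; have [y [[_ My] eq_pre]] := Mz n; have [w [j [Lw eq_pre']]] := My n.
  by exists w, j; rewrite -eq_pre.
have invM : shift_invariant M.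
  by move=> z [Lz _]; split; [exact: invL | move=> n; exists z, 0].
have neM : exists z, M z.
  by exists (shift x); split; [exact: invL | move=> n; exists x, 0].
have [_ Mz] :=
  minL M (fun z => @proj1 _ _) clM invM neM _ (shift_invariant_drop i invL Lx).
have [y [j [Ly eq_pre]]] := Mz (size u).
have eq_u : u = prefix (size u) (fun t => y (j.+1 + t)) by rewrite -eq_pre.
exists (y j), y; split => //; exists j.
rewrite /= addn0 [in LHS]eq_u /prefix -[1]addn0 iotaDl -map_comp.
by congr (_ :: _); apply: eq_map => t /=; rewrite addnA addn1.
Qed.

Definition factors L n : {set n.-tuple A} := [set t : n.-tuple A | pb (factor L t)].

(* Each factor is sent to one left extension, each left special factor of [S]
   to a second, different one; the two images are disjoint. *)
Lemma complexity_succ_ge L (a0 : A) n (S : {set n.-tuple A}) :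
  (forall u, factor L u -> exists b, factor L (b :: u)) ->
  (forall t, t \in S -> left_special L t) ->
  complexity L n + #|S| <= complexity L n.+1.
Proof.
move=> ext special_S.
pose ext1 (u : n.-tuple A) := odflt a0 [pick a | pb (factor L (a :: u))].
pose ext2 (u : n.-tuple A) :=
  odflt a0 [pick a | pb (factor L (a :: u)) && (a != ext1 u)].
have ext1P (u : n.-tuple A) : u \in factors L n -> factor L (ext1 u :: u).
  rewrite inE => /pbP /ext [b Hb]; rewrite /ext1.
  case: pickP => [a /pbP //|none]; by have /pbP := none b.
have ext2P (u : n.-tuple A) :
    u \in S -> ext2 u != ext1 u /\ factor L (ext2 u :: u).
  move=> /special_S [_ [b1 [b2 [neq_b [Hb1 Hb2]]]]]; rewrite /ext2.
  case: pickP => [a /andP [/pbP Ha neq_a] | none] //.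
  have [eq_b1 | neq_b1] := eqVneq b1 (ext1 u).
    have /negP[] := none b2; rewrite (introT (pbP _) Hb2) -eq_b1 /=.
    by apply/eqP => eq_b; apply: neq_b.
  by have /negP[] := none b1; rewrite (introT (pbP _) Hb1).
pose T1 := [set [tuple of ext1 u :: u] | u in factors L n].
pose T2 := [set [tuple of ext2 u :: u] | u in S].
have cons_inj (c : n.-tuple A -> A) :
    injective (fun u : n.-tuple A => [tuple of c u :: u]).
  by move=> u v /(congr1 val) [] _ /val_inj.
have disjT : T1 :&: T2 = set0.
  apply/setP => t; rewrite !inE; apply/negP => /andP [/imsetP [u _ ->]].
  case/imsetP=> v Sv /(congr1 val) [eq_ext /val_inj eq_uv]; subst v.
  by have [/eqP[]] := ext2P u Sv.
have subT : T1 :|: T2 \subset factors L n.+1.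
  apply/subsetP => t /setUP [] /imsetP [u Hu ->]; rewrite inE; apply/pbP.
    exact: ext1P.
  by have [_ ?] := ext2P u Hu.
have := subset_leq_card subT.
by rewrite cardsU disjT cards0 subn0 !card_imset ?cons_inj.
Qed.

Lemma complexity_linear_growth L k B (g : nat -> word A) :
  minimal_shift L -> (forall i, i < k -> SP L (g i)) ->
  (forall n i j, B <= n -> i < k -> j < k ->
     prefix n (g i) = prefix n (g j) -> i = j) ->
  forall m, k * m <= complexity L (B + m).
Proof.
move=> minL; case: k => [_ _ m | k SPg sep]; first by rewrite mul0n.
elim=> [|m IH]; first by rewrite muln0.
pose S := [set prefix_tuple (B + m) (g i) | i : 'I_k.+1].
have card_S : #|S| = k.+1.
  rewrite card_imset ?card_ord // => i j /(congr1 val) eq_pre.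
  exact: val_inj (sep (B + m) _ _ (leq_addr _ _) (ltn_ord i) (ltn_ord j) eq_pre).
have special_S t : t \in S -> left_special L t.
  by case/imsetP=> i _ ->; exact: SPg.
rewrite addnS.
have := complexity_succ_ge (g 0 0) (fun u => minimal_factor_left_ext minL) special_S.
rewrite card_S; lia.
Qed.

End Shifts.

Theorem mainTheorem14 (A : finType) (L : word A -> Prop) :
  minimal_shift L -> linear_complexity L -> finite_set (SP L).
Proof.
move=> minL [C [N boundC]]; apply: NNPP => infSP.
have [g [SPg inj_g]] := not_finite_injective infSP C.+1.
have [B sepB] := prefix_injective_eventually inj_g.
have growth := complexity_linear_growth minL SPg sepB.
have := growth (C * B + N + 1); have := boundC (B + (C * B + N + 1)).
nia.
Qed.
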